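(* Assume (A1)–(A4) below. For any $\omega\in\Delta^{L-1}$, $$\beta^*(\omega)=\sum_{t\in\mathcal T}\psi_t(\omega)\,\mathrm{LATE}_t,\qquad \psi_t(\omega)\ge0,\quad\sum_{t\in\mathcal T}\psi_t(\omega)=1,$$ where $\psi_t(\omega)=\sum_{\ell}\omega_\ell\alpha_t(\ell)$.
   Context: Observe i.i.d. $(Y_i,D_i,\mathbf Z_i)$, $D_i\in\{0,1\}$, $\mathbf Z_i=(Z_{1i},\dots,Z_{Li})'\in\{0,1\}^L$, $L\ge2$. Units have potential outcomes $Y_i(0),Y_i(1)$ and compliance type $D_i(\cdot):\{0,1\}^L\to\{0,1\}$, $D_i=D_i(\mathbf Z_i)$, $Y_i=D_iY_i(1)+(1-D_i)Y_i(0)$; $\mathcal T$ is the set of types, $\theta_t=P(D_i(\cdot)=t)$, $\mathrm{LATE}_t=\mathbb E[Y_i(1)-Y_i(0)\mid D_i(\cdot)=t]$, and $t(z_\ell,z_{-\ell})$ is type $t$'s treatment at the instrument vector with $\ell$-th coordinate $z_\ell$, others $z_{-\ell}$. $p_\ell=P(Z_{\ell i}=1)$, $\pi_\ell,\rho_\ell$ the differences of $\mathbb E[D_i\mid Z_{\ell i}=z]$, $\mathbb E[Y_i\mid Z_{\ell i}=z]$ between $z=1,0$, $\mathrm{Wald}_\ell=\rho_\ell/\pi_\ell$, $\Sigma_Z=\mathrm{Var}(\mathbf Z_i)$. $q_\ell(z_{-\ell})=P(Z_{-\ell}=z_{-\ell}\mid Z_\ell=1)$, $q^0_\ell(z_{-\ell})=P(Z_{-\ell}=z_{-\ell}\mid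 Z_\ell=0)$, $\varphi_t(\ell)=\sum_{z_{-\ell}}[t(1,z_{-\ell})q_\ell(z_{-\ell})-t(0,z_{-\ell})q^0_\ell(z_{-\ell})]$, $\alpha_t(\ell)=\theta_t\varphi_t(\ell)/\pi_\ell$. $\Delta^{L-1}$ is the probability simplex in $\mathbb R^L$ and $\beta^*(\omega)=\sum_\ell\omega_\ell\mathrm{Wald}_\ell$ (the estimand of the representative targeting estimator $\sum_\ell\omega_\ell\widehat{\mathrm{Wald}}_\ell$). Assumptions: (A1) $(Y_i(0),Y_i(1),D_i(\cdot))$ independent of $\mathbf Z_i$. (A2) $D_i(z)$ nondecreasing in each coordinate for every $i$. (A3) $p_\ell>0$, $\pi_\ell>0$ for all $\ell$; $\Sigma_Z$ positive definite. (A4) For each $\ell$, $\mathbb E[f(Z_{-\ell})\mid Z_\ell=1]\ge\mathbb E[f(Z_{-\ell})\mid Z_\ell=0]$ for every nondecreasing $f:\{0,1\}^{L-1}\to\mathbb R$. *)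

From HB Require Import structures.
From mathcomp Require Import all_boot all_order all_algebra.
From mathcomp Require Import all_classical all_reals all_analysis.
Set Implicit Arguments.
Unset Strict Implicit.
Unset Printing Implicit Defensive.
Import Order.TTheory GRing.Theory Num.Theory.
Import numFieldNormedType.Exports.
Local Open Scope classical_set_scope.
Local Open Scope ring_scope.

(* Instrument vectors z in {0,1}^L, and z_{-l} in {0,1}^{L-1}. *)
Definition ivec (L : nat) := {ffun 'I_L -> bool}.
Definition ivecm (L : nat) := {ffun 'I_L.-1 -> bool}.
Definition ctype (L : nat) := {ffun ivec L -> bool}.

Definition zminus L (l : 'I_L) (z : ivec L) : ivecm L :=
  [ffun j : 'I_L.-1 => z (lift l j)].
Definition zjoin L (l : 'I_L) (b : bool) (zm : ivecm L) : ivec L :=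
  [ffun i : 'I_L => if unlift l i is Some j then zm j else b].

Definition coord_nondecr L (t : ctype L) : Prop :=
  forall (l : 'I_L) (zm : ivecm L), (t (zjoin l false zm) <= t (zjoin l true zm))%N.
(* the set T of (monotone) compliance types *)
Definition is_type L (t : ctype L) : bool :=
  [forall l : 'I_L, forall zm : ivecm L, t (zjoin l false zm) ==> t (zjoin l true zm)].

Definition nondecr_fun (R : realType) m (f : {ffun 'I_m -> bool} -> R) : Prop :=
  forall x y : {ffun 'I_m -> bool}, (forall j, x j ==> y j) -> f x <= f y.

Section Model.
Context {d : measure_display} {T : measurableType d} {R : realType}
  (P : probability T R) (L : nat)
  (Y0 Y1 : T -> R) (Dt : T -> ctype L) (Z : T -> ivec L).

Definition Pr (A : set T) : R := fine (P A).
Definition Ex (f : T -> R) : R := fine (\int[P]_w (f w)%:E)%E.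
Definition ind (b : bool) : R := (b : nat)%:R.

Definition Dobs (w : T) : R := ind (Dt w (Z w)).
Definition Yobs (w : T) : R := Dobs w * Y1 w + (1 - Dobs w) * Y0 w.

Definition p_ (l : 'I_L) : R := Pr [set w | Z w l].
Definition condE (f : T -> R) (l : 'I_L) (b : bool) : R :=
  Ex (fun w => f w * ind (Z w l == b)) / Pr [set w | Z w l = b].
Definition pi_ (l : 'I_L) : R := condE Dobs l true - condE Dobs l false.
Definition rho_ (l : 'I_L) : R := condE Yobs l true - condE Yobs l false.
Definition Wald (l : 'I_L) : R := rho_ l / pi_ l.

Definition SigmaZ : 'M[R]_L :=
  \matrix_(j, k) (Pr [set w | Z w j /\ Z w k] - Pr [set w | Z w j] * Pr [set w | Z w k]).

Definition theta (t : ctype L) : R := Pr [set w | Dt w = t].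
Definition LATE (t : ctype L) : R :=
  Ex (fun w => (Y1 w - Y0 w) * ind (Dt w == t)) / theta t.

Definition q_ (l : 'I_L) (b : bool) (zm : ivecm L) : R :=
  Pr [set w | zminus l (Z w) = zm /\ Z w l = b] / Pr [set w | Z w l = b].

Definition varphi (t : ctype L) (l : 'I_L) : R :=
  \sum_(zm : ivecm L)
    ((ind (t (zjoin l true zm))) * q_ l true zm - (ind (t (zjoin l false zm))) * q_ l false zm).

Definition alpha (t : ctype L) (l : 'I_L) : R := theta t * varphi t l / pi_ l.

Definition beta_star (om : 'I_L -> R) : R := \sum_(l < L) om l * Wald l.

Definition psi (om : 'I_L -> R) (t : ctype L) : R := \sum_(l < L) om l * alpha t l.

End Model.

Definition posdef (R : realType) n (S : 'M[R]_n) : Prop :=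
  forall v : 'cV[R]_n, v != 0 -> 0 < (v^T *m S *m v) 0 0.

Definition in_simplex (R : realType) L (om : 'I_L -> R) : Prop :=
  (forall l, 0 <= om l) /\ \sum_(l < L) om l = 1.

(* By (A1), integrating Y(0), Y(1) or 1 over the event {D(.) = t, Z = z}
   factors as P(Z = z) times the integral over {D(.) = t}.  Hence each
   conditional mean E[. | Z_l = b] of D and of Y is a sum over compliance
   types t, weighted by theta_t (resp. E[Y(1) - Y(0); D(.) = t], which is
   theta_t LATE_t) and by the conditional law of Z_{-l}.  Subtracting b = 0
   from b = 1 gives pi_l = sum_t theta_t phi_t(l) and
   rho_l = sum_t theta_t phi_t(l) LATE_t, so Wald_l is the alpha(l)-weighted
   combination of the LATE_t with weights summing to 1; averaging over l with
   the weights omega gives beta*(omega).  Types violating (A2) have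
   theta_t = 0.  For a monotone type, phi_t(l) >= 0 because t(1, .) >= t(0, .)
   pointwise and, t(0, .) being nondecreasing, (A4) compares its means under
   q_l and q^0_l.  Positive definiteness of Sigma_Z gives 0 < p_l < 1, so both
   events {Z_l = b} have positive probability. *)

From HB Require Import structures.
From mathcomp Require Import all_boot all_order all_algebra.
From mathcomp Require Import all_classical all_reals all_analysis.
From mathcomp Require Import measurable_realfun ring.
Import Order.TTheory GRing.Theory Num.Theory.
Import numFieldNormedType.Exports.
Local Open Scope classical_set_scope.
Local Open Scope ring_scope.

Set Implicit Arguments.
Unset Strict Implicit.
Unset Printing Implicit Defensive.

Lemma zminus_zjoin L (l : 'I_L) b (zm : ivecm L) : zminus l (zjoin l b zm) = zm.
Proof. by apply/ffunP => j; rewrite !ffunE liftK. Qed.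

Lemma zjoin_at L (l : 'I_L) b (zm : ivecm L) : zjoin l b zm l = b.
Proof. by rewrite ffunE unlift_none. Qed.

Lemma zjoinK L (l : 'I_L) (z : ivec L) : zjoin l (z l) (zminus l z) = z.
Proof.
apply/ffunP => i; rewrite ffunE; case: unliftP => [j ->|->] //.
by rewrite ffunE.
Qed.

Lemma eq_zjoin L (l : 'I_L) b zm (z : ivec L) :
  (zminus l z = zm /\ z l = b) <-> z = zjoin l b zm.
Proof.
split => [[<- <-]|->]; first by rewrite zjoinK.
by rewrite zminus_zjoin zjoin_at.
Qed.

Lemma reindex_zjoin (V : nmodType) L (l : 'I_L) b (F : ivec L -> V) :
  \sum_(z : ivec L | z l == b) F z = \sum_(zm : ivecm L) F (zjoin l b zm).
Proof.
rewrite (reindex_onto (zjoin l b) (zminus l)) /=; last first.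
  by move=> z /eqP <-; rewrite zjoinK.
by apply: eq_bigl => zm; rewrite zjoin_at zminus_zjoin !eqxx.
Qed.

Lemma is_type_zjoin L (t : ctype L) l zm :
  is_type t -> t (zjoin l false zm) ==> t (zjoin l true zm).
Proof. by move=> /forallP /(_ l) /forallP. Qed.

Lemma coord_nondecr_is_type L (t : ctype L) : coord_nondecr t -> is_type t.
Proof.
move=> tND; apply/forallP => l; apply/forallP => zm; apply/implyP => t0.
by have := tND l zm; rewrite t0; case: (t _).
Qed.

(* Change the coordinates of [x] into those of [y] one at a time. *)
Lemma is_type_mono L (t : ctype L) : is_type t ->
  forall x y : ivec L, (forall i, x i ==> y i) -> t x ==> t y.
Proof.
move=> tT x y xy.
pose zk (k : nat) : ivec L := [ffun i : 'I_L => if (i < k)%N then y i else x i].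
have zk0 : zk 0%N = x by apply/ffunP => i; rewrite ffunE.
have zkL : zk L = y by apply/ffunP => i; rewrite ffunE ltn_ord.
suff mono_zk k : (k <= L)%N -> t x ==> t (zk k) by rewrite -zkL mono_zk.
elim: k => [|k IHk] kL; first by rewrite zk0 implybb.
suff step : t (zk k) ==> t (zk k.+1).
  by move: (IHk (ltnW kL)) step; case: (t x); case: (t (zk k)).
pose i0 : 'I_L := Ordinal kL.
have zk_minus : zminus i0 (zk k) = zminus i0 (zk k.+1).
  apply/ffunP => j; rewrite !ffunE /=.
  have /= ne : lift i0 j != i0 :> nat by rewrite (inj_eq val_inj) eq_sym neq_lift.
  by rewrite ltn_neqAle ne.
rewrite -(zjoinK i0 (zk k)) -(zjoinK i0 (zk k.+1)) zk_minus !ffunE /= ltnn leqnn.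
move: (xy i0); case: (x i0); case: (y i0) => //= _; rewrite ?implybb //.
exact: is_type_zjoin.
Qed.

Section probability_basics.
Context d (T : measurableType d) (R : realType) (P : probability T R).

Lemma PrE (S : set T) : measurable S -> P S = (Pr P S)%:E.
Proof. by move=> mS; rewrite /Pr fineK // fin_num_measure. Qed.

Lemma Pr_ge0 (S : set T) : 0 <= Pr P S.
Proof. by rewrite /Pr fine_ge0 // measure_ge0. Qed.

Lemma fine_integral1 (S : set T) : measurable S ->
  fine (\int[P]_(w in S) (1 : R)%:E) = Pr P S.
Proof. by move=> mS; rewrite integral_cst // mul1e. Qed.

Lemma fin_num_integral (S : set T) (g : T -> R) :
  measurable S -> P.-integrable setT (EFin \o g) ->
  (\int[P]_(w in S) (g w)%:E)%E \is a fin_num.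
Proof.
by move=> mS intg; apply: integrable_fin_num => //; exact: integrableS intg.
Qed.

Lemma Ex_add (f g : T -> R) :
  P.-integrable setT (EFin \o f) -> P.-integrable setT (EFin \o g) ->
  Ex P (f \+ g) = Ex P f + Ex P g.
Proof.
move=> intf intg; rewrite /Ex.
have -> : (fun w => ((f \+ g) w)%:E) = (EFin \o f) \+ (EFin \o g) by [].
by rewrite integralD_EFin // fineD // integrable_fin_num.
Qed.

Lemma fine_integralB (S : set T) (f g : T -> R) : measurable S ->
  P.-integrable setT (EFin \o f) -> P.-integrable setT (EFin \o g) ->
  fine (\int[P]_(w in S) (f w - g w)%:E) =
  fine (\int[P]_(w in S) (f w)%:E) - fine (\int[P]_(w in S) (g w)%:E).
Proof.
move=> mS intf intg.
rewrite (eq_integral (fun w => (f w)%:E - (g w)%:E)%E) // integralB_EFin //.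
- by rewrite fineB // fin_num_integral.
- exact: integrableS intf.
- exact: integrableS intg.
Qed.

Lemma fine_integral_null (S : set T) (g : T -> R) : measurable S ->
  P.-integrable setT (EFin \o g) -> Pr P S = 0 ->
  fine (\int[P]_(w in S) (g w)%:E) = 0.
Proof.
move=> mS intg PS0; rewrite null_set_integral //.
- exact: measurable_funS (measurable_int _ intg).
- by apply: eq_trans (PrE mS) _; rewrite PS0.
Qed.

End probability_basics.

Section finite_valued.
Context d (T : measurableType d) (R : realType) (P : probability T R).
Variables (F : finType) (X : T -> F).
Hypothesis mX : forall x, measurable [set w | X w = x].

Lemma measurable_comp_pred (A : pred F) : measurable [set w | A (X w)].
Proof.
have -> : [set w | A (X w)] = \bigcup_(x in [set x | A x]) [set w | X w = x].
  by apply/seteqP; split => [w Aw|w [x Ax /= ->]] //; exists (X w).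
exact: fin_bigcup_measurable finite_finset _.
Qed.

Let mul_comp_patchE (g : T -> R) (h : F -> R) :
  (fun w => (g w * h (X w))%:E) =
  (fun w => \sum_(x : F) (h x)%:E * ((EFin \o g) \_ [set w | X w = x]) w)%E.
Proof.
apply/funext => w; rewrite (bigD1 (X w)) //= big1 ?adde0.
  by rewrite /patch mem_set //= EFinM muleC.
move=> x xw; rewrite /patch memNset ?mule0 //= => Xwx.
by move: xw; rewrite Xwx eqxx.
Qed.

Let integrable_patch_fiber (g : T -> R) x : P.-integrable setT (EFin \o g) ->
  P.-integrable setT ((EFin \o g) \_ [set w | X w = x]).
Proof. by move=> intg; apply/(integrable_mkcond _ (mX x)); exact: integrableS intg. Qed.

Lemma integrable_mul_comp (g : T -> R) (h : F -> R) :
  P.-integrable setT (EFin \o g) ->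
  P.-integrable setT (EFin \o (fun w => g w * h (X w))).
Proof.
move=> intg; rewrite /comp mul_comp_patchE.
apply: integrable_sum => // x _.
by apply: integrableZl => //; exact: integrable_patch_fiber.
Qed.

Lemma Ex_mul_comp (g : T -> R) (h : F -> R) : P.-integrable setT (EFin \o g) ->
  Ex P (fun w => g w * h (X w)) =
  \sum_(x : F) h x * fine (\int[P]_(w in [set w | X w = x]) (g w)%:E).
Proof.
move=> intg; have int_x x := integrable_patch_fiber x intg.
have termE x : (\int[P]_w ((h x)%:E * ((EFin \o g) \_ [set w | X w = x]) w) =
    (h x * fine (\int[P]_(w in [set w | X w = x]) (g w)%:E))%:E)%E.
  by rewrite integralZl // -integral_mkcond EFinM fineK // fin_num_integral.
rewrite /Ex mul_comp_patchE integral_sum //; last by move=> x; exact: integrableZl.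
by under eq_bigr do rewrite termE; rewrite sumEFin.
Qed.

Lemma Ex_mul_ind (g : T -> R) x : P.-integrable setT (EFin \o g) ->
  Ex P (fun w => g w * ind (X w == x)) =
  fine (\int[P]_(w in [set w | X w = x]) (g w)%:E).
Proof.
move=> intg; rewrite (Ex_mul_comp (fun y => ind (y == x)) intg) (bigD1 x) //=.
rewrite big1 ?addr0 ?eqxx ?mul1r // => y /negbTE ->.
by rewrite mul0r.
Qed.

Lemma Ex_comp (h : F -> R) :
  Ex P (fun w => h (X w)) = \sum_(x : F) h x * Pr P [set w | X w = x].
Proof.
have -> : (fun w => h (X w)) = (fun w => 1 * h (X w)).
  by apply/funext => w; rewrite mul1r.
rewrite Ex_mul_comp; last exact: finite_measure_integrable_cst.
by apply: eq_bigr => x _; rewrite fine_integral1.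
Qed.

Lemma sum_Pr_fiber : \sum_(x : F) Pr P [set w | X w = x] = 1.
Proof.
transitivity (\sum_(x : F) 1 * Pr P [set w | X w = x]).
  by apply: eq_bigr => x _; rewrite mul1r.
rewrite -Ex_comp /Ex fine_integral1 //.
by rewrite /Pr probability_setT.
Qed.

Lemma Pr_comp_pred (A : pred F) :
  Pr P [set w | A (X w)] = \sum_(x | A x) Pr P [set w | X w = x].
Proof.
rewrite big_mkcond /=.
transitivity (Ex P (fun w => ind (A (X w)))); last first.
  rewrite (Ex_comp (fun x => ind (A x))); apply: eq_bigr => x _.
  by case: (A x); rewrite /ind ?mul1r ?mul0r.
rewrite /Pr /Ex -[in LHS](setIT [set w | A (X w)]).
rewrite -integral_indic //; last exact: measurable_comp_pred.
congr fine; apply: eq_integral => w _; rewrite indicE /ind.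
by case: (boolP (A (X w))) => Aw; [rewrite mem_set | rewrite memNset //= (negbTE Aw)].
Qed.

End finite_valued.

Section proportional_integrals.
Context d (T : measurableType d) (R : realType) (mu : {measure set T -> \bar R}).
Local Open Scope ereal_scope.

Lemma ge0_integral_mrestr (S : set T) (mS : measurable S) (f : T -> \bar R) :
  measurable_fun setT f -> (forall x, 0 <= f x) ->
  \int[mrestr mu mS]_x f x = \int[mu]_(x in S) f x.
Proof.
move=> mf f0; rewrite -(setUv S) ge0_integral_setU //; last 3 first.
- exact: measurableC.
- by rewrite setUv.
- by rewrite disj_set2E setICr.
rewrite (@null_set_integral _ _ _ _ (~` S)); last 3 first.
- exact: measurableC.
- exact: measurable_funS mf.
- by change (mu (~` S `&` S) = 0); rewrite setICl measure0.
rewrite adde0; apply: eq_measure_integral => A mA AS.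
by change (mu (A `&` S) = mu A); rewrite setIidl.
Qed.

Variables (g : T -> R) (S S' : set T).
Hypotheses (mS : measurable S) (mS' : measurable S').

Definition proportional_pushforward (c : R) := forall B, measurable B ->
  mu (S `&` g @^-1` B) = c%:E * mu (S' `&` g @^-1` B).

Lemma ge0_integral_proportional (c : {nonneg R}) (h : R -> \bar R) :
  proportional_pushforward c%:num -> measurable_fun setT g ->
  measurable_fun setT h -> (forall y, 0 <= h y) ->
  \int[mu]_(x in S) h (g x) = c%:num%:E * \int[mu]_(x in S') h (g x).
Proof.
move=> gS mg mh h0; have mhg : measurable_fun setT (h \o g) by exact: measurableT_comp.
rewrite -(ge0_integral_mrestr mS) // -(ge0_integral_mrestr mS') //.
have pushE (m : {measure set T -> \bar R}) :
    \int[m]_x h (g x) = \int[pushforward m g]_y h y.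
  by rewrite (ge0_integral_pushforward mg) // preimage_setT.
rewrite !pushE -ge0_integral_mscale //.
apply: eq_measure_integral => A mA _.
change (mu (g @^-1` A `&` S) = c%:num%:E * mu (g @^-1` A `&` S')).
by rewrite setIC gS // setIC.
Qed.

Lemma integral_proportional (c : R) : (0 <= c)%R ->
  proportional_pushforward c -> mu.-integrable setT (EFin \o g) ->
  \int[mu]_(x in S) (g x)%:E = c%:E * \int[mu]_(x in S') (g x)%:E.
Proof.
move=> c0 gS intg.
have mg : measurable_fun setT g by apply/measurable_EFinP; exact: measurable_int intg.
have propE (h : R -> \bar R) := @ge0_integral_proportional (NngNum c0) h gS mg.
rewrite integralE [X in _ = _ * X]integralE.
have posE D : \int[mu]_(x in D) (EFin \o g)^\+ x = \int[mu]_(x in D) (EFin^\+) (g x).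
  by apply: eq_integral => x _; rewrite !funeposE.
have negE D : \int[mu]_(x in D) (EFin \o g)^\- x = \int[mu]_(x in D) (EFin^\-) (g x).
  by apply: eq_integral => x _; rewrite !funenegE.
rewrite !posE !negE.
rewrite (propE (EFin^\+)); [|exact: measurable_funepos|exact: funepos_ge0].
rewrite (propE (EFin^\-)); [|exact: measurable_funeneg|exact: funeneg_ge0].
rewrite [RHS]muleBr //; apply: fin_num_adde_defl; rewrite fin_numN -negE.
apply: integrable_neg_fin_num => //; exact: integrableS intg.
Qed.

End proportional_integrals.

Lemma posdef_diag_gt0 (R : realType) n (S : 'M[R]_n) : posdef S -> forall i, 0 < S i i.
Proof.
move=> Spd i; have ei_neq0 : (delta_mx i 0 : 'cV[R]_n) != 0.
  by apply/eqP => /matrixP /(_ i 0) /eqP; rewrite !mxE !eqxx oner_eq0.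
by have := Spd _ ei_neq0; rewrite trmx_delta -rowE -colE !mxE.
Qed.

Lemma sum_ind_zjoin (R : realType) L (l : 'I_L) b (F : ivec L -> R) :
  \sum_(z : ivec L) ind (z l == b) * F z = \sum_(zm : ivecm L) F (zjoin l b zm).
Proof.
rewrite -reindex_zjoin [RHS]big_mkcond; apply: eq_bigr => z _.
by rewrite /ind; case: (z l == b); rewrite ?mul1r ?mul0r.
Qed.

Section model.
Context d (T : measurableType d) (R : realType) (P : probability T R) (L : nat)
  (Y0 Y1 : T -> R) (Dt : T -> ctype L) (Z : T -> ivec L).
Hypotheses (mZ : forall z, measurable [set w | Z w = z])
  (mDt : forall t, measurable [set w | Dt w = t]).
Hypotheses (intY0 : P.-integrable setT (EFin \o Y0))
  (intY1 : P.-integrable setT (EFin \o Y1)).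
Hypothesis indep : forall (A B : set R) (t : ctype L) (z : ivec L),
  measurable A -> measurable B ->
  P [set w | A (Y0 w) /\ B (Y1 w) /\ Dt w = t /\ Z w = z]
  = (P [set w | A (Y0 w) /\ B (Y1 w) /\ Dt w = t] * P [set w | Z w = z])%E.
Hypothesis D_mono : forall w, coord_nondecr (Dt w).
Hypotheses (p_gt0 : forall l, 0 < p_ P Z l) (pi_gt0 : forall l, 0 < pi_ P Dt Z l).
Hypothesis SigmaZ_posdef : posdef (SigmaZ P Z).
Hypothesis Zminus_incr : forall (l : 'I_L) (f : ivecm L -> R), nondecr_fun f ->
  condE P Z (fun w => f (zminus l (Z w))) l false
  <= condE P Z (fun w => f (zminus l (Z w))) l true.

Let pZ z := Pr P [set w | Z w = z].
Let pZl l b := Pr P [set w | Z w l = b].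
Let Et (Y : T -> R) t := fine (\int[P]_(w in [set w | Dt w = t]) (Y w)%:E).
Let DZ w := (Dt w, Z w).

Lemma DZ_fiber t z : [set w | DZ w = (t, z)] = [set w | Dt w = t /\ Z w = z].
Proof. by rewrite /DZ; apply/seteqP; split => w /= => [[-> ->]|[-> ->]]. Qed.

Lemma measurable_Dt_Z t z : measurable [set w | Dt w = t /\ Z w = z].
Proof. exact: measurableI (mDt t) (mZ z). Qed.

Lemma measurable_DZ p : measurable [set w | DZ w = p].
Proof. by case: p => t z; rewrite DZ_fiber; exact: measurable_Dt_Z. Qed.

Lemma measurable_Zl l b : measurable [set w | Z w l = b].
Proof.
have -> : [set w | Z w l = b] = [set w | (fun z : ivec L => z l == b) (Z w)].
  by apply/seteqP; split => w /= /eqP.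
exact: (measurable_comp_pred mZ (fun z : ivec L => z l == b)).
Qed.

Let indep_Z (Y : T -> R) := forall t z,
  fine (\int[P]_(w in [set w | Dt w = t /\ Z w = z]) (Y w)%:E) = pZ z * Et Y t.

Lemma indep_Z_outcomes A B t z : measurable A -> measurable B ->
  P ([set w | Dt w = t /\ Z w = z] `&` (Y0 @^-1` A `&` Y1 @^-1` B)) =
  ((pZ z)%:E * P ([set w | Dt w = t] `&` (Y0 @^-1` A `&` Y1 @^-1` B)))%E.
Proof.
move=> mA mB.
have -> : [set w | Dt w = t /\ Z w = z] `&` (Y0 @^-1` A `&` Y1 @^-1` B) =
    [set w | A (Y0 w) /\ B (Y1 w) /\ Dt w = t /\ Z w = z].
  by apply/seteqP; split => w /= => [[[-> ->] []]|[? [? [-> ->]]]].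
have -> : [set w | Dt w = t] `&` (Y0 @^-1` A `&` Y1 @^-1` B) =
    [set w | A (Y0 w) /\ B (Y1 w) /\ Dt w = t].
  by apply/seteqP; split => w /= => [[-> []]|[? [? ->]]].
by rewrite indep // (PrE P (mZ z)) muleC.
Qed.

Lemma Pr_Dt_Z t z : Pr P [set w | Dt w = t /\ Z w = z] = pZ z * theta P Dt t.
Proof.
have := indep_Z_outcomes t z measurableT measurableT.
by rewrite !preimage_setT !setIT (PrE P (mDt t)) /Pr => ->.
Qed.

Lemma indep_Z_of (Y : T -> R) : P.-integrable setT (EFin \o Y) ->
  (forall t z B, measurable B ->
    P ([set w | Dt w = t /\ Z w = z] `&` Y @^-1` B) =
    ((pZ z)%:E * P ([set w | Dt w = t] `&` Y @^-1` B))%E) ->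
  indep_Z Y.
Proof.
move=> intY YZ t z.
have pZ_ge0 : 0 <= pZ z := Pr_ge0 P _.
rewrite (integral_proportional (measurable_Dt_Z t z) (mDt t) pZ_ge0 _ intY);
  last exact: YZ.
by rewrite fineM // fin_num_integral.
Qed.

Lemma indep_Z_Y0 : indep_Z Y0.
Proof.
apply: indep_Z_of => // t z B mB.
by have := indep_Z_outcomes t z mB measurableT; rewrite preimage_setT !setIT.
Qed.

Lemma indep_Z_Y1 : indep_Z Y1.
Proof.
apply: indep_Z_of => // t z B mB.
by have := indep_Z_outcomes t z measurableT mB; rewrite preimage_setT !setTI.
Qed.

Lemma Et1 t : Et (fun=> 1) t = theta P Dt t.
Proof. exact: fine_integral1. Qed.

Lemma indep_Z1 : indep_Z (fun=> 1).
Proof. by move=> t z; rewrite Et1 (fine_integral1 P (measurable_Dt_Z t z)) Pr_Dt_Z. Qed.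

Lemma indep_ZB (Y Y' : T -> R) :
  P.-integrable setT (EFin \o Y) -> P.-integrable setT (EFin \o Y') ->
  indep_Z Y -> indep_Z Y' -> indep_Z (fun w => Y w - Y' w).
Proof.
move=> intY intY' YZ Y'Z t z.
rewrite /Et (fine_integralB (measurable_Dt_Z t z)) //.
by rewrite (fine_integralB (mDt t)) // YZ Y'Z mulrBr.
Qed.

Lemma integrable_mul_types (Y : T -> R) (h : ctype L -> ivec L -> R) :
  P.-integrable setT (EFin \o Y) ->
  P.-integrable setT (EFin \o (fun w => Y w * h (Dt w) (Z w))).
Proof. exact: (integrable_mul_comp measurable_DZ (fun p => h p.1 p.2)). Qed.

Lemma Ex_types (Y : T -> R) (h : ctype L -> ivec L -> R) :
  P.-integrable setT (EFin \o Y) -> indep_Z Y ->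
  Ex P (fun w => Y w * h (Dt w) (Z w)) =
  \sum_(t : ctype L) \sum_(z : ivec L) h t z * (pZ z * Et Y t).
Proof.
move=> intY YZ; rewrite (Ex_mul_comp measurable_DZ (fun p => h p.1 p.2) intY).
by rewrite pair_bigA; apply: eq_bigr => -[t z] _; rewrite DZ_fiber YZ.
Qed.

Lemma sum_theta : \sum_(t : ctype L) theta P Dt t = 1.
Proof. exact: sum_Pr_fiber. Qed.

Lemma pZl_sum l b : pZl l b = \sum_(z : ivec L | z l == b) pZ z.
Proof.
rewrite -(Pr_comp_pred P mZ (fun z => z l == b)); congr Pr.
by apply/seteqP; split => w /= /eqP.
Qed.

Lemma pZl_true_false l : pZl l true + pZl l false = 1.
Proof.
rewrite !pZl_sum -(sum_Pr_fiber P mZ) [RHS](bigID (fun z : ivec L => z l)) /=.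
by congr (_ + _); apply: eq_bigl => z; rewrite ?eqb_id ?eqbF_neg.
Qed.

Lemma p_lt1 l : p_ P Z l < 1.
Proof.
have := posdef_diag_gt0 SigmaZ_posdef l; rewrite /SigmaZ mxE.
have -> : [set w | Z w l /\ Z w l] = [set w | Z w l].
  by apply/seteqP; split => w /=; [case|].
rewrite -/(p_ P Z l) -{1}(mulr1 (p_ P Z l)) -mulrBr pmulr_rgt0 ?subr_gt0 //.
Qed.

Lemma pZl_gt0 l b : 0 < pZl l b.
Proof.
case: b; first exact: p_gt0.
have pT_lt1 : pZl l true < 1 := p_lt1 l.
by rewrite -[pZl l false](addKr (pZl l true)) pZl_true_false addrC subr_gt0.
Qed.

Lemma q_E l b zm : q_ P Z l b zm = pZ (zjoin l b zm) / pZl l b.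
Proof. by rewrite /q_; congr (Pr P _ / _); apply/seteqP; split => w /= /eq_zjoin. Qed.

Lemma q_ge0 l b zm : 0 <= q_ P Z l b zm.
Proof. by rewrite /q_ divr_ge0 ?Pr_ge0. Qed.

Lemma sum_q l b : \sum_(zm : ivecm L) q_ P Z l b zm = 1.
Proof.
under eq_bigr do rewrite q_E.
by rewrite -mulr_suml -reindex_zjoin -pZl_sum divff // lt0r_neq0 // pZl_gt0.
Qed.

Lemma condE_add (f g : T -> R) l b :
  P.-integrable setT (EFin \o f) -> P.-integrable setT (EFin \o g) ->
  condE P Z (f \+ g) l b = condE P Z f l b + condE P Z g l b.
Proof.
move=> intf intg.
have intZl (k : T -> R) : P.-integrable setT (EFin \o k) ->
    P.-integrable setT (EFin \o (fun w => k w * ind (Z w l == b))).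
  exact: (integrable_mul_comp (measurable_Zl l) (fun b' => ind (b' == b))).
rewrite /condE -mulrDl -Ex_add ?intZl //.
by congr (Ex P _ / _); apply/funext => w; rewrite /= mulrDl.
Qed.

Lemma condE_types (Y : T -> R) (h : ctype L -> ivec L -> R) l b :
  P.-integrable setT (EFin \o Y) -> indep_Z Y ->
  condE P Z (fun w => Y w * h (Dt w) (Z w)) l b =
  \sum_(t : ctype L) Et Y t * \sum_(zm : ivecm L) h t (zjoin l b zm) * q_ P Z l b zm.
Proof.
move=> intY YZ; rewrite /condE.
under eq_fun do rewrite -mulrA.
rewrite (Ex_types (fun t z => h t z * ind (z l == b))) // mulr_suml.
apply: eq_bigr => t _; under [X in _ = _ * X]eq_bigr do rewrite q_E.
rewrite -(sum_ind_zjoin l b (fun z => h t z * (pZ z / pZl l b))).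
by rewrite mulr_suml mulr_sumr; apply: eq_bigr => z _; ring.
Qed.

Lemma condE_D l b : condE P Z (Dobs Dt Z) l b =
  \sum_(t : ctype L) theta P Dt t *
    \sum_(zm : ivecm L) ind (t (zjoin l b zm)) * q_ P Z l b zm.
Proof.
have -> : Dobs (R:=R) Dt Z = (fun w => 1 * (fun t z => ind (t z)) (Dt w) (Z w)).
  by apply/funext => w; rewrite mul1r.
rewrite (condE_types (Y := fun=> 1) (fun t z => ind (t z))); last 2 first.
- exact: finite_measure_integrable_cst.
- exact: indep_Z1.
by under eq_bigr do rewrite Et1.
Qed.

Lemma piE l : pi_ P Dt Z l = \sum_(t : ctype L) theta P Dt t * varphi P Z t l.
Proof.
rewrite /pi_ !condE_D -sumrB; apply: eq_bigr => t _.
by rewrite -mulrBr /varphi -sumrB.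
Qed.

Let intB : P.-integrable setT (EFin \o (fun w => Y1 w - Y0 w)) :=
  integrableB measurableT intY1 intY0.

Lemma condE_Yobs l b : condE P Z (Yobs Y0 Y1 Dt Z) l b =
  \sum_(t : ctype L) Et Y0 t +
  \sum_(t : ctype L) Et (fun w => Y1 w - Y0 w) t *
    \sum_(zm : ivecm L) ind (t (zjoin l b zm)) * q_ P Z l b zm.
Proof.
have -> : Yobs Y0 Y1 Dt Z =
    (fun w => Y0 w * (fun _ _ => 1) (Dt w) (Z w)) \+
    (fun w => (Y1 w - Y0 w) * (fun t z => ind (t z)) (Dt w) (Z w)).
  by apply/funext => w; rewrite /Yobs /Dobs /=; ring.
have indepB := indep_ZB intY1 intY0 indep_Z_Y1 indep_Z_Y0.
rewrite condE_add; last 2 first.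
- exact: integrable_mul_types (fun _ _ => 1) intY0.
- exact: integrable_mul_types (fun t z => ind (t z)) intB.
rewrite (condE_types (fun _ _ => 1) _ _ intY0 indep_Z_Y0).
rewrite (condE_types (fun t z => ind (t z)) _ _ intB indepB).
congr (_ + _); apply: eq_bigr => t _.
by under eq_bigr do rewrite mul1r; rewrite sum_q mulr1.
Qed.

Lemma rhoE l : rho_ P Y0 Y1 Dt Z l =
  \sum_(t : ctype L) Et (fun w => Y1 w - Y0 w) t * varphi P Z t l.
Proof.
rewrite /rho_ !condE_Yobs opprD addrACA subrr add0r -sumrB.
by apply: eq_bigr => t _; rewrite -mulrBr /varphi -sumrB.
Qed.

Lemma theta_LATE t :
  theta P Dt t * LATE P Y0 Y1 Dt t = Et (fun w => Y1 w - Y0 w) t.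
Proof.
rewrite /LATE (Ex_mul_ind mDt t intB).
have [theta0|theta_neq0] := eqVneq (theta P Dt t) 0; last by rewrite mulrC divfK.
by rewrite theta0 mul0r /Et fine_integral_null.
Qed.

Lemma WaldE l :
  Wald P Y0 Y1 Dt Z l = \sum_(t : ctype L) alpha P Dt Z t l * LATE P Y0 Y1 Dt t.
Proof.
rewrite /Wald rhoE mulr_suml; apply: eq_bigr => t _.
by rewrite -theta_LATE /alpha; ring.
Qed.

Lemma sum_alpha l : \sum_(t : ctype L) alpha P Dt Z t l = 1.
Proof. by rewrite /alpha -mulr_suml -piE divff // lt0r_neq0. Qed.

Lemma condE_zminus (f : ivecm L -> R) l b :
  condE P Z (fun w => f (zminus l (Z w))) l b =
  \sum_(zm : ivecm L) f zm * q_ P Z l b zm.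
Proof.
have -> : (fun w => f (zminus l (Z w))) =
    (fun w => 1 * (fun _ z => f (zminus l z)) (Dt w) (Z w)).
  by apply/funext => w; rewrite mul1r.
rewrite (condE_types (Y := fun=> 1) (fun _ z => f (zminus l z))); last 2 first.
- exact: finite_measure_integrable_cst.
- exact: indep_Z1.
under eq_bigr do rewrite Et1.
by rewrite -mulr_suml sum_theta mul1r; under eq_bigr do rewrite zminus_zjoin.
Qed.

Lemma nondecr_slice (t : ctype L) l b : is_type t ->
  nondecr_fun (fun zm : ivecm L => ind (t (zjoin l b zm)) : R).
Proof.
move=> tT x y xy; rewrite /ind ler_nat.
have xy' i : zjoin l b x i ==> zjoin l b y i.
  by rewrite !ffunE; case: unlift => [j|] //=; rewrite implybb.
by move: (is_type_mono tT xy'); case: (t _); case: (t _).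
Qed.

Lemma varphi_ge0 (t : ctype L) l : is_type t -> 0 <= varphi P Z t l.
Proof.
move=> tT; pose f zm : R := ind (t (zjoin l false zm)).
have := Zminus_incr l (nondecr_slice l false tT); rewrite !(condE_zminus f) => fq.
apply: le_trans (_ : 0 <= \sum_zm (f zm * q_ P Z l true zm - f zm * q_ P Z l false zm)) _.
  by rewrite sumrB subr_ge0.
apply: ler_sum => zm _; rewrite lerD2r ler_wpM2r ?q_ge0 // /f /ind ler_nat.
by have := is_type_zjoin l zm tT; case: (t _); case: (t _).
Qed.

Lemma theta_nontype (t : ctype L) : ~~ is_type t -> theta P Dt t = 0.
Proof.
move=> tN; rewrite /theta; have -> : [set w | Dt w = t] = set0.
  apply/seteqP; split => w //= Dwt; apply: (negP tN); rewrite -Dwt.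
  exact: coord_nondecr_is_type.
by rewrite /Pr measure0.
Qed.

Lemma psi_nontype om (t : ctype L) : ~~ is_type t -> psi P Dt Z om t = 0.
Proof.
move=> tN; rewrite /psi big1 // => l _.
by rewrite /alpha theta_nontype // !mul0r mulr0.
Qed.

Lemma beta_star_types om : beta_star P Y0 Y1 Dt Z om =
  \sum_(t : ctype L | is_type t) psi P Dt Z om t * LATE P Y0 Y1 Dt t.
Proof.
rewrite big_rmcond /=; last by move=> t tN; rewrite psi_nontype // mul0r.
rewrite /beta_star; under [LHS]eq_bigr do rewrite WaldE mulr_sumr.
rewrite exchange_big; apply: eq_bigr => t _; rewrite /psi mulr_suml.
by apply: eq_bigr => l _; rewrite mulrA.
Qed.

Lemma psi_ge0 om (t : ctype L) : (forall l, 0 <= om l) -> is_type t ->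
  0 <= psi P Dt Z om t.
Proof.
move=> om_ge0 tT; apply: sumr_ge0 => l _; rewrite mulr_ge0 //.
by rewrite /alpha divr_ge0 ?mulr_ge0 ?Pr_ge0 ?varphi_ge0 // ltW.
Qed.

Lemma sum_psi_types om : \sum_(l < L) om l = 1 ->
  \sum_(t : ctype L | is_type t) psi P Dt Z om t = 1.
Proof.
move=> om_sum1; rewrite big_rmcond /=; last by move=> t; exact: psi_nontype.
rewrite /psi exchange_big /= -om_sum1; apply: eq_bigr => l _.
by rewrite -mulr_sumr sum_alpha mulr1.
Qed.

End model.

Unset Implicit Arguments.

Theorem proposition9 (d : measure_display) (T : measurableType d) (R : realType)
  (P : probability T R) (L : nat)
  (Y0 Y1 : T -> R) (Dt : T -> ctype L) (Z : T -> ivec L) :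
  (2 <= L)%N ->
  (* random elements: measurability and integrability *)
  (forall z : ivec L, measurable [set w | Z w = z]) ->
  (forall t : ctype L, measurable [set w | Dt w = t]) ->
  P.-integrable setT (fun w => (Y0 w)%:E) ->
  P.-integrable setT (fun w => (Y1 w)%:E) ->
  (* (A1) (Y(0), Y(1), D(.)) independent of Z *)
  (forall (A B : set R) (t : ctype L) (z : ivec L),
      measurable A -> measurable B ->
      P [set w | A (Y0 w) /\ B (Y1 w) /\ Dt w = t /\ Z w = z]
      = (P [set w | A (Y0 w) /\ B (Y1 w) /\ Dt w = t] * P [set w | Z w = z])%E) ->
  (* (A2) monotonicity *)
  (forall w, coord_nondecr (Dt w)) ->
  (* (A3) *)
  (forall l, 0 < p_ P Z l) ->
  (forall l, 0 < pi_ P Dt Z l) ->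
  posdef (SigmaZ P Z) ->
  (* (A4) *)
  (forall (l : 'I_L) (f : ivecm L -> R), nondecr_fun f ->
      condE P Z (fun w => f (zminus l (Z w))) l false
      <= condE P Z (fun w => f (zminus l (Z w))) l true) ->
  forall om : 'I_L -> R, in_simplex om ->
    beta_star P Y0 Y1 Dt Z om
      = \sum_(t : ctype L | is_type t) psi P Dt Z om t * LATE P Y0 Y1 Dt t
    /\ (forall t : ctype L, is_type t -> 0 <= psi P Dt Z om t)
    /\ \sum_(t : ctype L | is_type t) psi P Dt Z om t = 1.
Proof.
move=> _ mZ mDt intY0 intY1 indep D_mono p_gt0 pi_gt0 SigmaZ_pd Zminus_incr.
move=> om [om_ge0 om_sum1]; split; last split.
- exact (beta_star_types mZ mDt intY0 intY1 indep D_mono p_gt0 SigmaZ_pd om).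
- move=> t; exact (psi_ge0 mZ mDt indep pi_gt0 Zminus_incr om_ge0).
- exact (sum_psi_types mZ mDt indep D_mono pi_gt0 om_sum1).
Qed.
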